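(* Let $\mu$ be a non-atomic probability distribution on $[0,1]$ and $r:[0,1]\to\mathbb{R}$ a right-continuous function of bounded variation. Define $b^{(0)}=0$ and, for $k\ge1$, $$u^{(k)}=\arg\min_{u\in\mathcal{C}^+}\|r-b^{(k-1)}-u\|,\qquad b^{(k)}=\arg\min_{b\in\mathcal{C}^-}\|r-u^{(k)}-b\|,\qquad r^{(k)}=u^{(k)}+b^{(k)}.$$ Then $\lim_{k\to\infty}\|r^{(k)}-r\|=0$.
   Context: $\|g\|^2=\int_{[0,1]}g(x)^2\mu(dx)$ is the norm of $L_2(\mu)$; $\mathcal{C}^+$ is the closed convex cone of non-decreasing functions in $L_2(\mu)$ and $\mathcal{C}^-=-\mathcal{C}^+$ the cone of non-increasing functions; the minimizers are the (unique) metric projections onto these cones. *)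

From HB Require Import structures.
From mathcomp Require Import all_boot all_order all_algebra.
From mathcomp Require Import all_classical all_reals all_analysis.
Set Implicit Arguments. Unset Strict Implicit. Unset Printing Implicit Defensive.
Import Order.TTheory GRing.Theory Num.Theory numFieldNormedType.Exports.
Local Open Scope classical_set_scope.
Local Open Scope ring_scope.

Definition unit_itv (R : realType) : set R := `[0, 1].

Section L2defs.
Context (R : realType) (mu : probability R R).
Local Notation I01 := (@unit_itv R).

Definition L2 (g : R -> R) : Prop :=
  measurable_fun I01 g /\
  mu.-integrable I01 (fun x => ((g x) ^+ 2)%:E).

Definition L2norm (g : R -> R) : R :=
  Num.sqrt (fine (\int[mu]_(x in I01) ((g x) ^+ 2)%:E)).

Definition Cplus (g : R -> R) : Prop :=
  L2 g /\ exists v : R -> R,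
    (forall x y, 0 <= x -> x <= y -> y <= 1 -> v x <= v y) /\
    {ae mu, forall x : R, I01 x -> g x = v x}.

Definition Cminus (g : R -> R) : Prop := Cplus (fun x => - g x).

Definition is_proj (C : (R -> R) -> Prop) (f m : R -> R) : Prop :=
  C m /\ forall c, C c -> L2norm (fun x => f x - m x) <= L2norm (fun x => f x - c x).

End L2defs.

From HB Require Import structures.
From mathcomp Require Import all_boot all_order all_algebra.
From mathcomp Require Import all_classical all_reals all_analysis.
From mathcomp Require Import measurable_realfun zify ring lra.
Import Order.TTheory GRing.Theory Num.Theory numFieldNormedType.Exports.
Set Implicit Arguments.
Unset Strict Implicit.
Unset Printing Implicit Defensive.
Local Open Scope classical_set_scope.
Local Open Scope ring_scope.

(* Bounded variation makes r = v + w on [0, 1] with v nondecreasing and w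
   nonincreasing, i.e. v in C^+ and w in C^-; nothing else about r or mu is used.
   Let G k = ||r - u_k - b_k||^2.  Pythagoras for projections onto convex cones
   shows that each half-step decreases the squared residual by at least the
   squared length of the move, so G is nonincreasing and ||u_{k+1} - u_k||^2,
   ||b_{k+1} - b_k||^2 <= G k - G (k+1).  The obtuse-angle inequalities of both
   projections give G k <= <b_{k-1} - b_k, v - u_k>, while ||v - u_k||^2 grows at
   most linearly in k; Cauchy-Schwarz then yields G k^2 <= C k (G (k-1) - G k).
   Summing over N <= k < 2N gives G (2N)^2 <= 3C (G N - G (2N)), which tends to 0. *)

Lemma linear_coef_ge0 (R : realFieldType) (a b : R) : 0 <= b ->
  (forall t, 0 < t -> t <= 1 -> 0 <= 2 * t * a + t ^+ 2 * b) -> 0 <= a.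
Proof.
move=> b0 h; rewrite leNgt; apply/negP => a0.
have ba : 0 < b - a by lra.
pose t := - a / (b - a).
have t0 : 0 < t by rewrite divr_gt0 //; lra.
have t1 : t <= 1 by rewrite ler_pdivrMr //; lra.
have tba : t * (b - a) = - a by rewrite divfK // gt_eqF.
have := h t t0 t1; have -> : 2 * t * a + t ^+ 2 * b = t * (2 * a + t * b) by ring.
rewrite pmulr_rge0 // => h2.
have : 0 <= (b - a) * (2 * a + t * b) by rewrite mulr_ge0 // ltW.
have -> : (b - a) * (2 * a + t * b) = 2 * a * (b - a) + t * (b - a) * b by ring.
rewrite tba; nra.
Qed.

Section SquaredDropSequence.
Variables (R : realType) (g : R ^nat) (M : R).
Hypotheses (M_ge0 : 0 <= M) (g_ni : nonincreasing_seq g) (g_ge0 : forall n, 0 <= g n).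
Hypothesis g_sqr_le : forall n, g n.+1 ^+ 2 <= n.+2%:R * M * (g n - g n.+1).

Lemma sqr_le_drop_doubling N : (0 < N)%N -> g N.*2 ^+ 2 <= 3 * M * (g N - g N.*2).
Proof.
move=> N0.
(* Sum the hypothesis over N <= n < 2N, bounding each g n.+1 below by g N.*2. *)
have partial j : (j <= N)%N ->
    j%:R * g N.*2 ^+ 2 <= 3 * N%:R * M * (g N - g (N + j)%N).
  elim: j => [|j IH] jN; first by rewrite addn0 subrr mulr0 mul0r.
  have step : g N.*2 ^+ 2 <= 3 * N%:R * M * (g (N + j)%N - g (N + j).+1).
    have g2N : g N.*2 <= g (N + j).+1 by apply: g_ni; lia.
    have drop_ge0 : 0 <= g (N + j)%N - g (N + j).+1 by rewrite subr_ge0 g_ni.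
    have N3 : (N + j).+2%:R <= 3 * N%:R :> R by rewrite -natrM ler_nat; lia.
    apply: le_trans (le_trans _ (g_sqr_le (N + j))) _.
      by rewrite ler_sqr ?nnegrE.
    by rewrite ler_wpM2r // ler_wpM2r.
  rewrite -natr1 mulrDl mul1r addnS.
  have -> : 3 * N%:R * M * (g N - g (N + j).+1) =
      3 * N%:R * M * (g N - g (N + j)%N) +
      3 * N%:R * M * (g (N + j)%N - g (N + j).+1) by ring.
  exact: lerD (IH (ltnW jN)) step.
have := partial N (leqnn N); rewrite addnn.
have -> : 3 * N%:R * M * (g N - g N.*2) = N%:R * (3 * M * (g N - g N.*2)) by ring.
by rewrite ler_pM2l ?ltr0n.
Qed.

Lemma sqr_le_drop_cvg0 : g @ \oo --> 0.
Proof.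
have g_cvg : cvgn g.
  by apply: nonincreasing_is_cvgn => //; exists 0 => _ [n _ <-].
set l := limn g.
have l_le n : l <= g n by exact: nonincreasing_cvgn_ge.
have l_ge0 : 0 <= l by apply: limr_ge => //; apply: nearW.
have gap_cvg : 3 * M * (g N - l) @[N --> \oo] --> 0.
  rewrite -(mulr0 (3 * M)) -(subrr l); apply: cvgMl_tmp.
  by apply: cvgB => //; exact: cvg_cst.
have l2_le0 : l ^+ 2 <= 0.
  rewrite -(cvg_lim _ gap_cvg) //; apply: limr_ge; first exact: cvgP gap_cvg.
  near=> N; have N0 : (0 < N)%N by near: N; exists 1%N.
  have l2N : l ^+ 2 <= g N.*2 ^+ 2 by rewrite ler_sqr ?nnegrE.
  apply: le_trans l2N (le_trans (sqr_le_drop_doubling N0) _).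
  by rewrite ler_wpM2l ?mulr_ge0 // lerB.
have l0 : l = 0 by apply/eqP; rewrite -sqrf_eq0 eq_le l2_le0 sqr_ge0.
by rewrite -l0; exact: g_cvg.
Unshelve. all: by end_near.
Qed.

End SquaredDropSequence.

Section SemiInnerProduct.
Variables (R : realType) (V : lmodType R) (P : V -> Prop) (ip : V -> V -> R).
Hypothesis P_lincomb : forall s t f g, P f -> P g -> P (s *: f + t *: g).
Hypothesis ipC : forall f g, ip f g = ip g f.
Hypothesis ip_lincombl : forall s t f g h, P f -> P g -> P h ->
  ip (s *: f + t *: g) h = s * ip f h + t * ip g h.
Hypothesis ip_ge0 : forall f, P f -> 0 <= ip f f.

Local Notation Q f := (ip f f).

Lemma P_add f g : P f -> P g -> P (f + g).
Proof. by move=> Pf Pg; rewrite -[f]scale1r -[g]scale1r; exact: P_lincomb. Qed.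

Lemma P_sub f g : P f -> P g -> P (f - g).
Proof. by move=> Pf Pg; rewrite -[f]scale1r -scaleN1r; exact: P_lincomb. Qed.

Lemma ip_lincombr s t f g h : P f -> P g -> P h ->
  ip h (s *: f + t *: g) = s * ip h f + t * ip h g.
Proof. by move=> *; rewrite ipC ip_lincombl // (ipC f) (ipC g). Qed.

Lemma ipDl f g h : P f -> P g -> P h -> ip (f + g) h = ip f h + ip g h.
Proof.
move=> *; have -> : f + g = 1 *: f + 1 *: g by rewrite !scale1r.
by rewrite ip_lincombl // !mul1r.
Qed.

Lemma ipDr f g h : P f -> P g -> P h -> ip h (f + g) = ip h f + ip h g.
Proof. by move=> *; rewrite ipC ipDl // (ipC f) (ipC g). Qed.

Lemma ipBr f g h : P f -> P g -> P h -> ip h (f - g) = ip h f - ip h g.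
Proof.
move=> *; have -> : f - g = 1 *: f + (-1) *: g by rewrite scale1r scaleN1r.
by rewrite ip_lincombr // mul1r mulN1r.
Qed.

Lemma ip_lincomb2 s t f g : P f -> P g ->
  Q (s *: f + t *: g) = s ^+ 2 * Q f + 2 * s * t * ip f g + t ^+ 2 * Q g.
Proof.
move=> Pf Pg; have Pfg := P_lincomb s t Pf Pg.
by rewrite ip_lincombl // !ip_lincombr // (ipC g f); ring.
Qed.

Lemma ipBB f g : P f -> P g -> Q (f - g) = Q f - 2 * ip f g + Q g.
Proof.
move=> Pf Pg; have -> : f - g = 1 *: f + (-1) *: g by rewrite scale1r scaleN1r.
by rewrite ip_lincomb2 //; ring.
Qed.

Lemma ipBB_sym f g : P f -> P g -> Q (f - g) = Q (g - f).
Proof. by move=> Pf Pg; rewrite !ipBB // (ipC g); ring. Qed.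

Lemma ipBB_le s f g : P f -> P g -> 0 < s ->
  Q (f - g) <= (1 + s) * Q f + (1 + s^-1) * Q g.
Proof.
move=> Pf Pg s0; rewrite ipBB //.
have := ip_ge0 (P_lincomb s 1 Pf Pg); rewrite ip_lincomb2 // => h.
have : 0 <= s^-1 * (s ^+ 2 * Q f + 2 * s * 1 * ip f g + 1 ^+ 2 * Q g).
  by rewrite mulr_ge0 // invr_ge0 ltW.
have -> : s^-1 * (s ^+ 2 * Q f + 2 * s * 1 * ip f g + 1 ^+ 2 * Q g) =
    s * Q f + 2 * ip f g + s^-1 * Q g by field; rewrite gt_eqF.
lra.
Qed.

Lemma ip_CauchySchwarz f g : P f -> P g -> ip f g ^+ 2 <= Q f * Q g.
Proof.
move=> Pf Pg; set X := Q f; set Y := Q g; set p := ip f g.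
have X0 : 0 <= X by exact: ip_ge0.
have Y0 : 0 <= Y by exact: ip_ge0.
have hq s t : 0 <= s ^+ 2 * X + 2 * s * t * p + t ^+ 2 * Y.
  by rewrite -ip_lincomb2 //; exact/ip_ge0/P_lincomb.
have := hq Y (- p); have := hq p (- X); have := hq 1 1; have := hq 1 (-1).
have [Y0'|] := ltP 0 Y.
  move=> _ _ _ h; have : 0 <= Y * (X * Y - p ^+ 2) by nra.
  by rewrite pmulr_rge0 //; lra.
have [X0'|] := ltP 0 X.
  move=> _ _ _ h _; have : 0 <= X * (X * Y - p ^+ 2) by nra.
  by rewrite pmulr_rge0 //; lra.
move=> X0' Y0' h1 h2 _ _; have -> : X = 0 by lra.
have -> : Y = 0 by lra.
have -> : p = 0 by nra.
by rewrite expr0n mulr0.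
Qed.

Section ConeProjection.
Variable C : V -> Prop.
Hypothesis C_sub : forall c, C c -> P c.
Hypothesis C_cone : forall s t a c, 0 <= s -> 0 <= t -> C a -> C c ->
  C (s *: a + t *: c).

Definition ip_proj f m := C m /\ forall c, C c -> Q (f - m) <= Q (f - c).

Lemma ip_proj_le0 f m c : P f -> ip_proj f m -> C c -> ip (f - m) c <= 0.
Proof.
move=> Pf [Cm m_min] Cc; have [Pm Pc] := (C_sub Cm, C_sub Cc).
rewrite -oppr_ge0; apply: (linear_coef_ge0 (ip_ge0 Pc)) => t t0 t1.
have := m_min _ (C_cone ler01 (ltW t0) Cm Cc).
have -> : f - (1 *: m + t *: c) = 1 *: (f - m) + (- t) *: c.
  by rewrite !scale1r scaleNr opprD addrA.
set e := f - m; have Pe : P e := P_sub Pf Pm.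
rewrite ip_lincomb2 //.
(* The [set]s identify convertible copies of the same atom, which [lra] would
   otherwise treat as distinct (they differ in their canonical instance paths). *)
set q := Q e; set p := ip e c; lra.
Qed.

Lemma ip_proj_ge0 f m : P f -> ip_proj f m -> 0 <= ip (f - m) m.
Proof.
move=> Pf [Cm m_min]; have Pm := C_sub Cm.
apply: (linear_coef_ge0 (ip_ge0 Pm)) => t t0 t1.
have t1' : 0 <= 1 - t by lra.
have := m_min _ (C_cone t1' (lexx 0) Cm Cm).
have -> : f - ((1 - t) *: m + 0 *: m) = 1 *: (f - m) + t *: m.
  by rewrite scale0r addr0 scalerBl !scale1r opprB addrA addrAC.
set e := f - m; have Pe : P e := P_sub Pf Pm.
rewrite ip_lincomb2 //.
set q := Q e; set p := ip e m; lra.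
Qed.

Lemma ip_proj_obtuse f m c : P f -> ip_proj f m -> C c -> ip (f - m) (c - m) <= 0.
Proof.
move=> Pf mproj Cc; have [Pm Pc] := (C_sub mproj.1, C_sub Cc).
rewrite (ipBr Pc Pm (P_sub Pf Pm)).
have := ip_proj_le0 Pf mproj Cc; have := ip_proj_ge0 Pf mproj; lra.
Qed.

Lemma ip_proj_pythagoras f m c : P f -> ip_proj f m -> C c ->
  Q (f - m) + Q (m - c) <= Q (f - c).
Proof.
move=> Pf mproj Cc; have [Pm Pc] := (C_sub mproj.1, C_sub Cc).
have [Pe Pcm] := (P_sub Pf Pm, P_sub Pc Pm).
have -> : f - c = (f - m) - (c - m) by rewrite opprB addrA subrK.
rewrite (ipBB Pe Pcm) (ipBB_sym Pm Pc).
have := ip_proj_obtuse Pf mproj Cc; lra.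
Qed.

End ConeProjection.

Section AlternatingProjections.
Variables Cp Cm : V -> Prop.
Hypotheses (Cp_sub : forall c, Cp c -> P c) (Cm_sub : forall c, Cm c -> P c).
Hypothesis Cp_cone : forall s t a c, 0 <= s -> 0 <= t -> Cp a -> Cp c ->
  Cp (s *: a + t *: c).
Hypothesis Cm_cone : forall s t a c, 0 <= s -> 0 <= t -> Cm a -> Cm c ->
  Cm (s *: a + t *: c).

Variables (v w : V) (u b : nat -> V).
Hypotheses (Cp_v : Cp v) (Cm_w : Cm w) (b0 : b 0%N = 0).
Hypothesis u_proj : forall k, (0 < k)%N -> ip_proj Cp (v + w - b k.-1) (u k).
Hypothesis b_proj : forall k, (0 < k)%N -> ip_proj Cm (v + w - u k) (b k).

Let G k := Q (v + w - u k - b k).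

Let Pvw : P (v + w).
Proof. exact: P_add (Cp_sub Cp_v) (Cm_sub Cm_w). Qed.

Let Pu k : (0 < k)%N -> P (u k).
Proof. by move=> /u_proj[/Cp_sub]. Qed.

Let Cm_b k : Cm (b k).
Proof.
case: k => [|k]; last by case: (b_proj (ltn0Sn k)).
have -> : b 0%N = 0 *: w + 0 *: w by rewrite b0 scale0r addr0.
exact: Cm_cone (lexx 0) (lexx 0) Cm_w Cm_w.
Qed.

Let Pb k : P (b k). Proof. exact/Cm_sub/Cm_b. Qed.

Lemma alt_proj_residual_ge0 k : (0 < k)%N -> 0 <= G k.
Proof. by move=> k0; exact/ip_ge0/(P_sub (P_sub Pvw (Pu k0)) (Pb k)). Qed.

Lemma alt_proj_b_step k : (0 < k)%N ->
  G k + Q (b k - b k.-1) <= Q (v + w - b k.-1 - u k).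
Proof.
move=> k0; rewrite /G [in X in _ <= X]addrAC.
exact (ip_proj_pythagoras Cm_sub Cm_cone (P_sub Pvw (Pu k0)) (b_proj k0) (Cm_b k.-1)).
Qed.

Lemma alt_proj_u_step k : (0 < k)%N ->
  Q (v + w - b k - u k.+1) + Q (u k.+1 - u k) <= G k.
Proof.
move=> k0; rewrite /G [in X in _ <= X]addrAC.
exact (ip_proj_pythagoras Cp_sub Cp_cone (P_sub Pvw (Pb k))
  (u_proj (ltn0Sn k)) (u_proj k0).1).
Qed.

Lemma alt_proj_residual_drop k : (0 < k)%N ->
  Q (u k.+1 - u k) + Q (b k.+1 - b k) <= G k - G k.+1.
Proof.
move=> k0; have := alt_proj_u_step k0; have := alt_proj_b_step (ltn0Sn k); lra.
Qed.

Lemma alt_proj_residual_nonincr k : (0 < k)%N -> G k.+1 <= G k.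
Proof.
move=> k0; have := alt_proj_residual_drop k0.
have := ip_ge0 (P_sub (Pu (ltn0Sn k)) (Pu k0)); have := ip_ge0 (P_sub (Pb k.+1) (Pb k)).
lra.
Qed.

Lemma alt_proj_residual_le_ip k : (0 < k)%N -> G k <= ip (b k.-1 - b k) (v - u k).
Proof.
move=> k0; have [Pv Pw] := (Cp_sub Cp_v, Cm_sub Cm_w).
have [[Puk Pbk] Pbk'] := (Pu k0, Pb k, Pb k.-1).
set e := v + w - u k - b k.
have Pe : P e := P_sub (P_sub Pvw Puk) Pbk.
have -> : G k = ip e (v - u k) + ip e (w - b k).
  by rewrite /G -/e -(ipDr (P_sub Pv Puk) (P_sub Pw Pbk) Pe) addrACA addrA.
have e_w : ip e (w - b k) <= 0.
  exact (ip_proj_obtuse Cm_sub Cm_cone (P_sub Pvw Puk) (b_proj k0) Cm_w).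
have e_split : e = (v + w - b k.-1 - u k) + (b k.-1 - b k).
  by rewrite /e addrA (addrAC _ (- b k.-1)) subrK.
rewrite {1}e_split (ipDl (P_sub (P_sub Pvw Pbk') Puk) (P_sub Pbk' Pbk) (P_sub Pv Puk)).
have := ip_proj_obtuse Cp_sub Cp_cone (P_sub Pvw Pbk') (u_proj k0) Cp_v.
lra.
Qed.

Lemma alt_proj_dist_le k :
  Q (v - u k.+1) <= k.+1%:R * (Q (v - u 1%N) + G 1%N - G k.+1).
Proof.
elim: k => [|k IH]; first by rewrite mul1r addrK.
have [[Pv Pu1] Pu2] := (Cp_sub Cp_v, Pu (ltn0Sn k), Pu (ltn0Sn k.+1)).
set n : R := k.+1%:R; have n0 : 0 < n by rewrite ltr0n.
have ni0 : 0 < n^-1 by rewrite invr_gt0.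
have du : (1 + n) * Q (u k.+2 - u k.+1) <= (n + 1) * (G k.+1 - G k.+2).
  rewrite addrC; apply: ler_wpM2l; first lra.
  have := alt_proj_residual_drop (ltn0Sn k); have := ip_ge0 (P_sub (Pb k.+2) (Pb k.+1)).
  lra.
have IH' : (1 + n^-1) * Q (v - u k.+1) <= (n + 1) * (Q (v - u 1%N) + G 1%N - G k.+1).
  have -> : n + 1 = (1 + n^-1) * n by field; rewrite gt_eqF.
  by rewrite -mulrA; apply: ler_wpM2l => //; rewrite addr_ge0 // ltW.
have -> : v - u k.+2 = (v - u k.+1) - (u k.+2 - u k.+1) by rewrite opprB addrA subrK.
apply: le_trans (ipBB_le (P_sub Pv Pu1) (P_sub Pu2 Pu1) ni0) _.
rewrite invrK -natr1 -/n; apply: le_trans (lerD IH' du) _.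
by rewrite -mulrDr addrA subrK.
Qed.

Lemma alt_proj_residual_sqr_le k : (1 < k)%N ->
  G k ^+ 2 <= k%:R * (Q (v - u 1%N) + G 1%N) * (G k.-1 - G k).
Proof.
case: k => [|k] // k0 /=.
have [[[Pv Puk] Pbk] Pbk'] := (Cp_sub Cp_v, Pu (ltn0Sn k), Pb k.+1, Pb k).
have db : Q (b k - b k.+1) <= G k - G k.+1.
  rewrite (ipBB_sym Pbk' Pbk).
  have := alt_proj_residual_drop k0; have := ip_ge0 (P_sub (Pu (ltn0Sn k)) (Pu k0)).
  lra.
have dv : Q (v - u k.+1) <= k.+1%:R * (Q (v - u 1%N) + G 1%N).
  apply: le_trans (alt_proj_dist_le k) _.
  by rewrite ler_wpM2l // lerBlDr lerDl alt_proj_residual_ge0.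
have Gk_le := alt_proj_residual_le_ip (ltn0Sn k).
have sq : G k.+1 ^+ 2 <= ip (b k - b k.+1) (v - u k.+1) ^+ 2.
  rewrite ler_sqr ?nnegrE ?alt_proj_residual_ge0 //.
  exact: le_trans (alt_proj_residual_ge0 _) Gk_le.
apply: (le_trans sq); apply: le_trans (ip_CauchySchwarz (P_sub Pbk' Pbk) (P_sub Pv Puk)) _.
by rewrite [X in _ <= X]mulrC; apply: ler_pM => //; apply/ip_ge0/P_sub.
Qed.

Theorem alt_proj_residual_cvg0 : Q (v + w - u k - b k) @[k --> \oo] --> 0.
Proof.
rewrite -(cvg_shiftS (fun k => Q (v + w - u k - b k))).
apply: (@sqr_le_drop_cvg0 _ _ (Q (v - u 1%N) + G 1%N)).
- rewrite addr_ge0 ?alt_proj_residual_ge0 //.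
  exact/ip_ge0/P_sub/(Pu (ltn0Sn 0))/(Cp_sub Cp_v).
- by apply/nonincreasing_seqP => n; exact: alt_proj_residual_nonincr.
- by move=> n; exact: alt_proj_residual_ge0.
- by move=> n; exact: alt_proj_residual_sqr_le.
Qed.

End AlternatingProjections.

End SemiInnerProduct.

(* Composing with [clamp01] extends a function nondecreasing on [0, 1] to one
   nondecreasing on the whole line, as [nondecreasing_measurable] requires. *)
Definition clamp01 (R : realDomainType) (x : R) : R :=
  if x < 0 then 0 else if 1 < x then 1 else x.

Lemma clamp01_itv (R : realDomainType) (x : R) : clamp01 x \in `[0, 1].
Proof. by rewrite in_itv /= /clamp01; case: (ltP x 0) => ?; case: (ltP 1 x) => ?; lra. Qed.

Lemma clamp01_id (R : realDomainType) (x : R) : x \in `[0, 1] -> clamp01 x = x.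
Proof.
rewrite in_itv /= /clamp01 => /andP[? ?].
by case: (ltP x 0) => ?; case: (ltP 1 x) => ?; lra.
Qed.

Lemma clamp01_nondecreasing (R : realDomainType) : nondecreasing_fun (@clamp01 R).
Proof.
move=> x y xy; rewrite /clamp01.
case: (ltP x 0) => ?; case: (ltP 1 x) => ?;
  by case: (ltP y 0) => ?; case: (ltP 1 y) => ?; lra.
Qed.

Section L2Space.
Variables (R : realType) (mu : probability R R).
Local Notation I := (@unit_itv R).

Let measurable_I : measurable I.
Proof. exact: measurable_itv. Qed.

Definition L2ip (f g : R -> R) : R := fine (\int[mu]_(x in I) (f x * g x)%:E).

Lemma integrable_lincomb s t f g :
  mu.-integrable I (EFin \o f) -> mu.-integrable I (EFin \o g) ->
  mu.-integrable I (fun x => (s * f x + t * g x)%:E).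
Proof.
move=> If Ig.
have := integrableD measurable_I
  (integrableZl measurable_I s If) (integrableZl measurable_I t Ig).
by apply: eq_integrable => // x _ /=; rewrite EFinD !EFinM.
Qed.

Lemma L2_integrable_mul f g : L2 mu f -> L2 mu g ->
  mu.-integrable I (fun x => (f x * g x)%:E).
Proof.
move=> [mf If2] [mg Ig2].
apply: le_integrable (integrable_lincomb 1 1 If2 Ig2) => //.
  exact/measurable_EFinP/measurable_funM.
move=> x _ /=; rewrite lee_fin !mul1r normrM (ger0_norm (addr_ge0 (sqr_ge0 _) (sqr_ge0 _))).
rewrite -(real_normK (num_real (f x))) -(real_normK (num_real (g x))).
have := sqr_ge0 (`|f x| - `|g x|); nra.
Qed.

Lemma L2_lincomb s t f g : L2 mu f -> L2 mu g -> L2 mu (fun x => s * f x + t * g x).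
Proof.
move=> [mf If2] [mg Ig2].
have mh : measurable_fun I (fun x => s * f x + t * g x).
  by apply: measurable_funD; apply: measurable_funM.
split => //.
have := integrable_lincomb (2 * s ^+ 2) (2 * t ^+ 2) If2 Ig2.
apply: le_integrable => //; first exact/measurable_EFinP/measurable_funX.
move=> x _ /=; rewrite lee_fin (ger0_norm (sqr_ge0 _)); apply: le_trans (ler_norm _).
have := sqr_ge0 (s * f x - t * g x); nra.
Qed.

Lemma L2ipC f g : L2ip f g = L2ip g f.
Proof. by congr fine; apply: eq_integral => x _; rewrite mulrC. Qed.

Lemma L2ip_lincombl s t f g h : L2 mu f -> L2 mu g -> L2 mu h ->
  L2ip (fun x => s * f x + t * g x) h = s * L2ip f h + t * L2ip g h.
Proof.
move=> Lf Lg Lh; rewrite /L2ip.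
have [Ifh Igh] := (L2_integrable_mul Lf Lh, L2_integrable_mul Lg Lh).
rewrite (eq_integral (fun x => s%:E * (f x * h x)%:E + t%:E * (g x * h x)%:E)%E); last first.
  by move=> x _; rewrite -!EFinM -EFinD; congr EFin; ring.
rewrite integralD ?integrableZl // !integralZl //.
have fin_fh := integrable_fin_num measurable_I Ifh.
have fin_gh := integrable_fin_num measurable_I Igh.
by rewrite fineD ?fin_numM // !fineM.
Qed.

Lemma L2ip_ge0 f : 0 <= L2ip f f.
Proof. by apply/fine_ge0/integral_ge0 => x _; rewrite lee_fin -expr2 sqr_ge0. Qed.

Lemma L2norm_sqrt_ip f : L2norm mu f = Num.sqrt (L2ip f f).
Proof. by congr (Num.sqrt (fine _)); apply: eq_integral => x _; rewrite expr2. Qed.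

Lemma eq_L2norm f g : (forall x, I x -> f x ^+ 2 = g x ^+ 2) -> L2norm mu f = L2norm mu g.
Proof. by move=> fg; congr (Num.sqrt (fine _)); apply: eq_integral => x /set_mem /fg ->. Qed.

Lemma Cplus_L2 f : Cplus mu f -> L2 mu f.
Proof. by case. Qed.

Lemma Cminus_L2 f : Cminus mu f -> L2 mu f.
Proof.
move=> [Lf _]; suff -> : f = (fun x => -1 * - f x + 0 * - f x) by exact: L2_lincomb.
by apply/funext => x; ring.
Qed.

Lemma Cplus_cone s t f g : 0 <= s -> 0 <= t -> Cplus mu f -> Cplus mu g ->
  Cplus mu (fun x => s * f x + t * g x).
Proof.
move=> s0 t0 [Lf [vf [vf_mono f_ae]]] [Lg [vg [vg_mono g_ae]]].
split; first exact: L2_lincomb.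
exists (fun x => s * vf x + t * vg x); split.
  move=> x y x0 xy y1; apply: lerD; apply: ler_wpM2l => //.
    exact: vf_mono x0 xy y1.
  exact: vg_mono x0 xy y1.
by apply: filterS2 f_ae g_ae => x fx gx Ix; rewrite fx // gx.
Qed.

Lemma Cminus_cone s t f g : 0 <= s -> 0 <= t -> Cminus mu f -> Cminus mu g ->
  Cminus mu (fun x => s * f x + t * g x).
Proof.
move=> s0 t0 Cf Cg; rewrite /Cminus.
have -> : (fun x => - (s * f x + t * g x)) = (fun x => s * - f x + t * - g x).
  by apply/funext => x; ring.
exact: Cplus_cone.
Qed.

Lemma Cplus_comp_clamp01 g : {in `[0, 1] &, nondecreasing_fun g} ->
  Cplus mu (g \o @clamp01 R).
Proof.
move=> g_nd; have [in0 in1] : (0 : R) \in `[0, 1] /\ (1 : R) \in `[0, 1].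
  by split; rewrite in_itv /= lexx ler01.
have gc_nd : nondecreasing_fun (g \o @clamp01 R).
  by move=> x y xy; apply: g_nd; rewrite ?clamp01_itv ?clamp01_nondecreasing.
have gc_bnd x : `|g (clamp01 x)| <= `|g 0| + `|g 1|.
  have := clamp01_itv x; rewrite in_itv /= => /andP[c0 c1].
  have := g_nd _ _ in0 (clamp01_itv x) c0; have := g_nd _ _ (clamp01_itv x) in1 c1.
  have := ler_norm (g 1); have := ler_norm (- g 0); rewrite normrN.
  have := normr_ge0 (g 0); have := normr_ge0 (g 1).
  rewrite ler_norml; lra.
have mgc : measurable_fun I (g \o @clamp01 R) by exact: nondecreasing_measurable.
split; last first.
  by exists (g \o @clamp01 R); split; [move=> x y _ xy _; exact: gc_nd | exact: aeW].
split => //.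
apply: (le_integrable measurable_I _ _
  (finite_measure_integrable_cst mu ((`|g 0| + `|g 1|) ^+ 2) measurable_I)).
  exact/measurable_EFinP/measurable_funX.
move=> x _ /=; rewrite lee_fin !normrX lerXn2r ?nnegrE //.
exact: le_trans (gc_bnd x) (ler_norm _).
Qed.

Lemma bounded_variation_Cplus_Cminus r : bounded_variation 0 1 r ->
  exists v w, [/\ Cplus mu v, Cminus mu w & forall x, I x -> r x = v x + w x].
Proof.
(* [pos_tv 0 r] is by definition [neg_tv 0 (\- r)]. *)
move=> bv; exists ((fine \o pos_tv 0 r) \o @clamp01 R).
exists (fun x => - (fine \o neg_tv 0 r) (clamp01 x)); split.
- exact/Cplus_comp_clamp01/fine_neg_tv_nondecreasing/bounded_variationN.
- rewrite /Cminus; under eq_fun do rewrite opprK.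
  exact/Cplus_comp_clamp01/fine_neg_tv_nondecreasing.
- move=> x Ix; rewrite /= clamp01_id //.
  exact: (bounded_variation_pos_neg_tvE bv Ix).
Qed.

Lemma is_proj_ip_proj C f f' m : (forall x, I x -> f x = f' x) ->
  is_proj mu C f m -> ip_proj L2ip C f' m.
Proof.
move=> ff' [Cm m_min]; split => // c Cc.
have eqf g : L2norm mu (fun x => f x - g x) = L2norm mu (fun x => f' x - g x).
  by apply: eq_L2norm => x Ix; rewrite ff'.
by have := m_min c Cc; rewrite !eqf !L2norm_sqrt_ip ler_sqrt // L2ip_ge0.
Qed.

End L2Space.

Theorem proposition3 (R : realType) (mu : probability R R)
  (r : R -> R) (u b : nat -> R -> R) :
  mu (@unit_itv R) = 1%E ->
  (forall x : R, mu [set x] = 0%E) ->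
  (forall x : R, 0 <= x < 1 -> r t @[t --> x^'+] --> r x) ->
  bounded_variation 0 1 r ->
  b 0%N = (fun _ => 0) ->
  (forall k, (0 < k)%N ->
     is_proj mu (Cplus mu) (fun x => r x - b k.-1 x) (u k) /\
     is_proj mu (Cminus mu) (fun x => r x - u k x) (b k)) ->
  L2norm mu (fun x => u k x + b k x - r x) @[k --> \oo] --> 0.
Proof.
move=> _ _ _ r_bv b0 proj.
have [v [w [Cv Cw r_vw]]] := bounded_variation_Cplus_Cminus mu r_bv.
have u_proj k : (0 < k)%N -> ip_proj (L2ip mu) (Cplus mu) (v + w - b k.-1) (u k).
  by move=> /proj[+ _]; apply: is_proj_ip_proj => x Ix; rewrite r_vw.
have b_proj k : (0 < k)%N -> ip_proj (L2ip mu) (Cminus mu) (v + w - u k) (b k).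
  by move=> /proj[_]; apply: is_proj_ip_proj => x Ix; rewrite r_vw.
have residual_cvg0 := alt_proj_residual_cvg0 (@L2_lincomb R mu) (@L2ipC R mu)
  (@L2ip_lincombl R mu) (fun f _ => L2ip_ge0 mu f) (@Cplus_L2 R mu) (@Cminus_L2 R mu)
  (@Cplus_cone R mu) (@Cminus_cone R mu) Cv Cw b0 u_proj b_proj.
have -> : (fun k => L2norm mu (fun x => u k x + b k x - r x)) =
    (fun k => Num.sqrt (L2ip mu (fun x => v x + w x - u k x - b k x)
                               (fun x => v x + w x - u k x - b k x))).
  apply/funext => k; rewrite -L2norm_sqrt_ip; apply: eq_L2norm => x Ix /=.
  by rewrite r_vw // -sqrrN; congr (_ ^+ 2); ring.
by rewrite -sqrtr0; apply: cvg_comp residual_cvg0 _; exact: sqrt_continuous.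
Qed.
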